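(* For all terms $M,M'$: if $M\bullet\iota\equiv M'\bullet\iota$ then $M\sim_\alpha M'$.
   Context: Let $\mathcal V$ (the variables) be a type with decidable equality, equipped with functions $\mathrm{encode}:\mathcal V\to\mathbb N$ and $\mathrm{decode}:\mathbb N\to\mathcal V$ such that $\mathrm{encode}(\mathrm{decode}\,n)=n$ for all $n$. Let $\mathcal C$ (the constants) be any type. Terms $\Lambda$ are generated by: $c\,k$ ($k\in\mathcal C$), $v\,x$ ($x\in\mathcal V$), $\lambda[x:A]M$, $\Pi[x:A]B$ and $M\cdot N$; in $\lambda[x:A]M$ and $\Pi[x:A]B$ the name $x$ binds in $M$ (resp. $B$) but not in $A$. Terms are raw first-order syntax (not identified up to renaming of bound variables) and $\equiv$ denotes syntactic identity. The list of free variables is $\mathrm{fv}(c\,k)=[\,]$, $\mathrm{fv}(v\,x)=[x]$, $\mathrm{fv}(\lambda[x:A]M)=\mathrm{fv}\,A\mathbin{+\!\!+}(\mathrm{fv}\,M-x)$, $\mathrm{fv}(\Pi[x:A]B)=\mathrm{fv}\,A\mathbin{+\!\!+}(\mathrm{fv}\,B-x)$, $\mathrm{fv}(M\cdot N)=\mathrm{fv}\,M\mathbin{+\!\!+}\mathrm{fv}\,N$, where $\mathbin{+\!\!+}$ is list concatenation and $xs-x$ deletes every occurrence of $x$ from $xs$. Fix a function $\chi':\mathrm{List}\,\mathbb N\to\mathbb N$ with $\chi'(ns)\notin ns$ for every list $ns$, and put $X'(xs)=\mathrm{decode}(\chi'(\mathrm{map}\ \mathrm{encode}\ xs))$. A substitution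 is any function $\sigma:\mathcal V\to\Lambda$; $\iota=v$ is the identity substitution; $(\sigma,x:=N)(y)=N$ if $y=x$ and $\sigma\,y$ otherwise. For a substitution $\sigma$ and a list $xs$ of variables, $X(\sigma,xs)=X'(\text{concatenation of the lists }\mathrm{fv}(\sigma\,y)\text{ for }y\in xs)$. The action $M\bullet\sigma$ is defined by structural recursion: $c\,k\bullet\sigma=c\,k$; $v\,x\bullet\sigma=\sigma\,x$; $(M\cdot N)\bullet\sigma=(M\bullet\sigma)\cdot(N\bullet\sigma)$; $(\lambda[x:A]M)\bullet\sigma=\lambda[y:A\bullet\sigma](M\bullet(\sigma,x:=v\,y))$ with $y=X(\sigma,\mathrm{fv}\,M-x)$; $(\Pi[x:A]B)\bullet\sigma=\Pi[y:A\bullet\sigma](B\bullet(\sigma,x:=v\,y))$ with $y=X(\sigma,\mathrm{fv}\,B-x)$. Unary substitution is $M[x:=N]=M\bullet(\iota,x:=N)$. $\alpha$-conversion $\sim_\alpha$ is the inductively defined relation with rules: $c\,k\sim_\alpha c\,k$; $v\,x\sim_\alpha v\,x$; $M\cdot N\sim_\alpha M'\cdot N'$ if $M\sim_\alpha M'$ and $N\sim_\alpha N'$; $\lambda[x:A]M\sim_\alpha\lambda[x':A']M'$ if $A\sim_\alpha A'$ and there is a variable $y$ with $y\notin\mathrm{fv}\,M-x$, $y\notin\mathrm{fv}\,M'-x'$ and $M[x:=v\,y]\equiv M'[x':=v\,y]$; and the same rule with $\Pi$ in place of $\lambda$. *)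

From Stdlib Require Import List.
Import ListNotations.

Section Terms.
Variables (V C : Type).

Inductive term : Type :=
| Con : C -> term
| Var : V -> term
| Lam : V -> term -> term -> term
| Pi  : V -> term -> term -> term
| App : term -> term -> term.

Variable eqdec : forall x y : V, {x = y} + {x <> y}.
Variable encode : V -> nat.
Variable decode : nat -> V.
Variable chi' : list nat -> nat.

Definition del (xs : list V) (x : V) : list V := remove eqdec x xs.

Fixpoint fv (M : term) : list V :=
  match M with
  | Con _ => []
  | Var x => [x]
  | Lam x A M => fv A ++ del (fv M) x
  | Pi x A B => fv A ++ del (fv B) x
  | App M N => fv M ++ fv N
  end.

Definition X' (xs : list V) : V := decode (chi' (map encode xs)).

Definition subst := V -> term.

Definition iota : subst := Var.

Definition upd (s : subst) (x : V) (N : term) : subst :=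
  fun y => if eqdec y x then N else s y.

Definition Xs (s : subst) (xs : list V) : V := X' (flat_map (fun y => fv (s y)) xs).

Fixpoint act (M : term) (s : subst) : term :=
  match M with
  | Con k => Con k
  | Var x => s x
  | App M N => App (act M s) (act N s)
  | Lam x A M =>
      let y := Xs s (del (fv M) x) in
      Lam y (act A s) (act M (upd s x (Var y)))
  | Pi x A B =>
      let y := Xs s (del (fv B) x) in
      Pi y (act A s) (act B (upd s x (Var y)))
  end.

Definition usubst (M : term) (x : V) (N : term) : term := act M (upd iota x N).

Inductive alpha : term -> term -> Prop :=
| alpha_con : forall k, alpha (Con k) (Con k)
| alpha_var : forall x, alpha (Var x) (Var x)
| alpha_app : forall M N M' N', alpha M M' -> alpha N N' -> alpha (App M N) (App M' N')
| alpha_lam : forall x A M x' A' M' y,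
    alpha A A' ->
    ~ In y (del (fv M) x) -> ~ In y (del (fv M') x') ->
    usubst M x (Var y) = usubst M' x' (Var y) ->
    alpha (Lam x A M) (Lam x' A' M')
| alpha_pi : forall x A B x' A' B' y,
    alpha A A' ->
    ~ In y (del (fv B) x) -> ~ In y (del (fv B') x') ->
    usubst B x (Var y) = usubst B' x' (Var y) ->
    alpha (Pi x A B) (Pi x' A' B').

End Terms.

Arguments Con {V C}.
Arguments Var {V C}.
Arguments Lam {V C}.
Arguments Pi {V C}.
Arguments App {V C}.

From Stdlib Require Import List.

(* Under the identity substitution the binder chosen by [act] for [λ[x:A]M] is
   [y = X'(fv M - x)], which is fresh for [fv M - x] because [χ'] avoids its
   argument and [encode] is injective on the image of [decode]; and the body
   becomes [M[x:=v y]] on the nose.  So two terms with the same [•ι]-image have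
   binders that are renamed to a common fresh [y] with identical bodies, which
   is exactly the premise of the [λ]/[Π] rules of [alpha]. *)

Section ActIota.

Variables (V C : Type) (eqdec : forall x y : V, {x = y} + {x <> y})
  (encode : V -> nat) (decode : nat -> V).
Hypothesis encode_decode : forall n : nat, encode (decode n) = n.
Variable chi' : list nat -> nat.
Hypothesis chi'_notin : forall ns : list nat, ~ In (chi' ns) ns.

Local Notation term := (term V C).
Local Notation fv := (fv V C eqdec).
Local Notation del := (del V eqdec).
Local Notation X' := (X' V encode decode chi').
Local Notation act := (act V C eqdec encode decode chi').
Local Notation usubst := (usubst V C eqdec encode decode chi').
Local Notation alpha := (alpha V C eqdec encode decode chi').
Local Notation iota := (iota V C).

Lemma X'_notin (xs : list V) : ~ In (X' xs) xs.
Proof.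
  intro Hin; apply (in_map encode) in Hin; unfold X' in Hin.
  rewrite encode_decode in Hin; exact (chi'_notin _ Hin).
Qed.

Lemma Xs_iota (xs : list V) : Xs V C eqdec encode decode chi' iota xs = X' xs.
Proof.
  unfold Xs, iota; simpl; do 3 f_equal.
  induction xs as [|x xs IH]; simpl; congruence.
Qed.

Lemma act_iota_Lam (x : V) (A M : term) :
  let y := X' (del (fv M) x) in
  act (Lam x A M) iota = Lam y (act A iota) (usubst M x (Var y)).
Proof. simpl; now rewrite Xs_iota. Qed.

Lemma act_iota_Pi (x : V) (A B : term) :
  let y := X' (del (fv B) x) in
  act (Pi x A B) iota = Pi y (act A iota) (usubst B x (Var y)).
Proof. simpl; now rewrite Xs_iota. Qed.

Lemma alpha_of_act_iota (M M' : term) : act M iota = act M' iota -> alpha M M'.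
Proof.
  revert M'.
  induction M as [k|x|x A IHA M _|x A IHA M _|P IHP Q IHQ];
    intros M' Hact; destruct M' as [k'|x'|x' A' M'|x' A' M'|P' Q'];
    try (simpl in Hact; unfold iota in Hact; discriminate Hact).
  - injection Hact as ->; constructor.
  - injection Hact as ->; constructor.
  - rewrite !act_iota_Lam in Hact; injection Hact as Hy HA HM; rewrite <- Hy in HM.
    apply alpha_lam with (y := X' (del (fv M) x)); auto using X'_notin.
    rewrite Hy; apply X'_notin.
  - rewrite !act_iota_Pi in Hact; injection Hact as Hy HA HM; rewrite <- Hy in HM.
    apply alpha_pi with (y := X' (del (fv M) x)); auto using X'_notin.
    rewrite Hy; apply X'_notin.
  - injection Hact as HP HQ; constructor; auto.
Qed.

End ActIota.

Theorem mainTheorem3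
  (V C : Type) (eqdec : forall x y : V, {x = y} + {x <> y})
  (encode : V -> nat) (decode : nat -> V)
  (Henc : forall n : nat, encode (decode n) = n)
  (chi' : list nat -> nat)
  (Hchi : forall ns : list nat, ~ In (chi' ns) ns)
  (M M' : term V C) :
  act V C eqdec encode decode chi' M (iota V C)
    = act V C eqdec encode decode chi' M' (iota V C) ->
  alpha V C eqdec encode decode chi' M M'.
Proof. exact (alpha_of_act_iota V C eqdec encode decode Henc chi' Hchi M M'). Qed.
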